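(* For every EIC problem $(R,B)$, $(D)_{(R,B)}\le 2\cdot (C)_{(R,B)}$.
   Context: An EIC problem is a pair $(R,B)$ of matrices in $\mathbb{F}_2^{n\times m}$ with disjoint supports; node $u\in[n]$ needs block $a\in[m]$ if $R_{ua}=1$ and has block $a$ if $B_{ua}=1$. Let $P=\{(u,a):R_{ua}=1\}$, $B_u$ the $u$-th row of $B$, $\mathrm{diag}(B_u)$ the diagonal matrix with $B_u$ on the diagonal, and $\boldsymbol e_a$ the $a$-th standard basis row vector of $\mathbb{F}_2^m$. A centralized linear broadcast solution is a matrix $\beta\in\mathbb{F}_2^{h\times m}$ such that for every $(u,a)\in P$ there is $\boldsymbol\alpha\in\mathbb{F}_2^{h+m}$ with $\boldsymbol e_a=\boldsymbol\alpha\cdot\left[\begin{smallmatrix}\beta\\ \mathrm{diag}(B_u)\end{smallmatrix}\right]$; its length is $h$, and $(C)_{(R,B)}$ is the minimum length of such a solution. A (decentralized) linear broadcast solution is a tuple of matrices $\beta^{(1)},\dots,\beta^{(n)}$ with $\beta^{(u)}\in\mathbb{F}_2^{h_u\times m}$ ($h_u\ge 0$) such that (i) for each $u$ and each $a$ with $B_{ua}=0$, the $a$-th column of $\beta^{(u)}$ is zero, and (ii) for each $(u,a)\in P$ there is $\boldsymbol\alpha\in\mathbb{F}_2^{\sum_\ell h_\ell+m}$ with $\boldsymbol e_a=\boldsymbol\alpha\cdot\left[\begin{smallmatrix}\beta^{(1)}\\ \vdots\\ \beta^{(n)}\\ \mathrm{diag}(B_u)\end{smallmatrix}\right]$. Its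 length is $\sum_u h_u$, and $(D)_{(R,B)}$ is the minimum length of such a solution. *)

From HB Require Import structures.
From mathcomp Require Import all_boot all_order all_algebra.
Set Implicit Arguments. Unset Strict Implicit. Unset Printing Implicit Defensive.
Import GRing.Theory.
Local Open Scope ring_scope.

(* Matrices over F_2. Nodes are 'I_n, blocks are 'I_m. *)

Definition EIC_problem (n m : nat) (R B : 'M['F_2]_(n, m)) : Prop :=
  forall (u : 'I_n) (a : 'I_m), R u a != 0 -> B u a = 0.

Definition e_vec (m : nat) (a : 'I_m) : 'rV['F_2]_m := delta_mx 0 a.

Definition central_sol (n m h : nat) (R B : 'M['F_2]_(n, m))
    (beta : 'M['F_2]_(h, m)) : Prop :=
  forall (u : 'I_n) (a : 'I_m), R u a = 1 ->
    exists alpha : 'rV['F_2]_(h + m),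
      e_vec a = alpha *m col_mx beta (diag_mx (row u B)).

Definition decentral_sol (n m : nat) (R B : 'M['F_2]_(n, m))
    (hs : 'I_n -> nat) (betas : forall u : 'I_n, 'M['F_2]_(hs u, m)) : Prop :=
  (forall (u : 'I_n) (a : 'I_m), B u a = 0 ->
     forall k : 'I_(hs u), betas u k a = 0) /\
  (forall (u : 'I_n) (a : 'I_m), R u a = 1 ->
    exists alpha : 'rV['F_2]_((\sum_(l < n) hs l)%N + m),
      e_vec a = alpha *m col_mx (mxcol betas) (diag_mx (row u B))).

Definition is_C (n m : nat) (R B : 'M['F_2]_(n, m)) (c : nat) : Prop :=
  (exists beta : 'M['F_2]_(c, m), central_sol R B beta) /\
  (forall (h : nat) (beta : 'M['F_2]_(h, m)), central_sol R B beta -> (c <= h)%N).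

Definition is_D (n m : nat) (R B : 'M['F_2]_(n, m)) (d : nat) : Prop :=
  (exists (hs : 'I_n -> nat) (betas : forall u, 'M['F_2]_(hs u, m)),
      decentral_sol R B betas /\ (\sum_(u < n) hs u)%N = d) /\
  (forall (hs : 'I_n -> nat) (betas : forall u, 'M['F_2]_(hs u, m)),
      decentral_sol R B betas -> (d <= \sum_(u < n) hs u)%N).

From mathcomp Require Import all_boot all_order all_algebra.
Set Implicit Arguments.
Unset Strict Implicit.
Unset Printing Implicit Defensive.

Import GRing.Theory.
Local Open Scope ring_scope.

(* Fix a centralized solution beta of length c.  For every request (u, a),
   decoding e_a from beta and the side information of u splits
   e_a = x + y with x in the row space of beta and y supported on the
   blocks held by u.  The parts x span a space of dimension r <= c, so r
   requests have parts x forming a basis of it.  For each of these, node u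
   broadcasts its y and some node holding a (there is one, because a
   decentralized solution exists) broadcasts e_a.  These 2r locally
   computable rows span every basis vector x = e_a - y, hence every x, so
   each node decodes exactly as in the centralized solution. *)

Lemma enum_matrix_sub (F : fieldType) (T : finType) (A : {set T}) m
    (x : T -> 'rV[F]_m) t :
  t \in A -> (x t <= \matrix_(k < #|A|) x (enum_val k))%MS.
Proof.
move=> tA; have <- : row (enum_rank_in tA t) (\matrix_k x (enum_val k)) = x t.
  by rewrite rowK enum_rankK_in.
exact: row_sub.
Qed.

Lemma sub_mxcol (F : fieldType) n m (p_ : 'I_n -> nat)
    (V_ : forall i, 'M[F]_(p_ i, m)) i :
  (V_ i <= \mxcol_j V_ j)%MS.
Proof. by rewrite eqmx_col (sumsmx_sup i) // genmxE. Qed.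

Lemma delta_mx_notin_zero_col (F : fieldType) k m (A : 'M[F]_(k, m)) a :
  col a A = 0 -> ~~ ((delta_mx 0 a : 'rV_m) <= A)%MS.
Proof.
move=> colA0; apply/negP => /submxP [alpha /(congr1 (col a))].
rewrite !colE -mulmxA -!colE colA0 mulmx0 => /colP/(_ 0).
by rewrite !mxE !eqxx => /eqP; rewrite oner_eq0.
Qed.

Section Fibres.
Variables (F : fieldType) (n r m : nat) (owner : 'I_r -> 'I_n).
Variable x : 'I_r -> 'rV[F]_m.

Definition fibre (u : 'I_n) := [set i | owner i == u].

Definition fibre_mx (u : 'I_n) : 'M[F]_(#|fibre u|, m) :=
  \matrix_k x (enum_val k).

Lemma sum_card_fibre : (\sum_u #|fibre u|)%N = r.
Proof.
rewrite -[RHS]card_ord -sum1_card (partition_big owner predT) //=.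
by apply: eq_bigr => u _; rewrite -sum1_card; apply: eq_bigl => i; rewrite inE.
Qed.

Lemma fibre_mx_row_sub i : (x i <= fibre_mx (owner i))%MS.
Proof. by apply: enum_matrix_sub; rewrite inE. Qed.

Lemma fibre_mx_supp (S : 'M[F]_(n, m)) :
    (forall i a, S (owner i) a = 0 -> x i 0 a = 0) ->
  forall u a, S u a = 0 -> forall k, fibre_mx u k a = 0.
Proof.
move=> x_supp u a Sua k; rewrite mxE x_supp //.
by have := enum_valP k; rewrite inE => /eqP ->.
Qed.

End Fibres.

Lemma decentral_sol_held n m (R B : 'M['F_2]_(n, m)) (hs : 'I_n -> nat)
    (betas : forall u, 'M['F_2]_(hs u, m)) :
  decentral_sol R B betas -> forall u a, R u a = 1 -> exists w, B w a != 0.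
Proof.
move=> [betas_supp betas_decode] u a Rua.
have [w Bwa | no_holder] := pickP (fun w => B w a != 0); first by exists w.
have B0 w : B w a = 0 by apply/eqP/negbFE/no_holder.
have [alpha e_a] := betas_decode u a Rua.
suff /delta_mx_notin_zero_col : col a (col_mx (mxcol betas) (diag_mx (row u B))) = 0.
  by rewrite -/(e_vec a) e_a submxMl.
apply/colP => k; rewrite !mxE; case: splitP => k' _; rewrite !mxE.
  by rewrite betas_supp.
by case: eqP => [->|_]; rewrite ?B0 ?mul0rn ?mulr0n.
Qed.

Section LocalizedSolution.
Variables (n m c : nat) (R B : 'M['F_2]_(n, m)) (beta : 'M['F_2]_(c, m)).
Hypothesis beta_sol : central_sol R B beta.
Hypothesis held : forall u a, R u a = 1 -> exists w, B w a != 0.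

Local Notation side u := (diag_mx (row u B)).

Definition requests := [set p : 'I_n * 'I_m | R p.1 p.2 == 1].

Definition decoding_coef (p : 'I_n * 'I_m) : 'rV_(c + m) :=
  e_vec p.2 *m pinvmx (col_mx beta (side p.1)).
Definition coded_part p := lsubmx (decoding_coef p) *m beta.
Definition side_part p := rsubmx (decoding_coef p) *m side p.1.

Lemma e_vec_split p : p \in requests -> e_vec p.2 = coded_part p + side_part p.
Proof.
rewrite inE => /eqP Rp; rewrite -mul_row_col hsubmxK mulmxKpV //.
by have [alpha ->] := beta_sol Rp; apply: submxMl.
Qed.

Lemma side_part_supp p a : B p.1 a = 0 -> side_part p 0 a = 0.
Proof. by move=> Ba; rewrite /side_part mul_mx_diag !mxE Ba mulr0. Qed.

Definition holder (p : 'I_n * 'I_m) := odflt p.1 [pick w | B w p.2 != 0].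

Lemma holder_holds p : p \in requests -> B (holder p) p.2 != 0.
Proof.
rewrite inE => /eqP /held [w Bw]; rewrite /holder.
by case: pickP => [//|/(_ w)]; rewrite Bw.
Qed.

Definition coded_mx : 'M_(#|requests|, m) := \matrix_k coded_part (enum_val k).

Lemma rank_coded_mx : (\rank coded_mx <= c)%N.
Proof.
apply: leq_trans (rank_leq_row beta); apply: mxrankS.
by apply/row_subP => k; rewrite rowK submxMl.
Qed.

Definition basis_request (i : 'I_(\rank coded_mx)) :=
  enum_val (maxrankfun coded_mx i).

Lemma basis_request_in i : basis_request i \in requests.
Proof. exact: enum_valP. Qed.

Definition side_owner i := (basis_request i).1.
Definition block_owner i := holder (basis_request i).
Definition side_row i := side_part (basis_request i).
Definition block_row i := e_vec (basis_request i).2.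

Definition localized_hs u := (#|fibre side_owner u| + #|fibre block_owner u|)%N.

Definition localized_betas u : 'M_(localized_hs u, m) :=
  col_mx (fibre_mx side_owner side_row u) (fibre_mx block_owner block_row u).

Lemma localized_length : (\sum_u localized_hs u <= 2 * c)%N.
Proof.
rewrite big_split /= !sum_card_fibre mul2n -addnn.
by rewrite leq_add ?rank_coded_mx.
Qed.

Lemma localized_supp u a : B u a = 0 -> forall k, localized_betas u k a = 0.
Proof.
move=> Bua k; rewrite -[k]splitK; case: split => k' /=.
  rewrite col_mxEu; apply: fibre_mx_supp Bua k' => i a'.
  exact: side_part_supp.
rewrite col_mxEd; apply: fibre_mx_supp Bua k' => i a' Ba'.
rewrite /block_row /e_vec mxE eqxx /=; case: eqP => // a'E.
by have := holder_holds (basis_request_in i); rewrite -a'E Ba' eqxx.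
Qed.

Lemma localized_span : (coded_mx <= mxcol localized_betas)%MS.
Proof.
rewrite -(eq_maxrowsub coded_mx); apply/row_subP => i.
rewrite row_rowsub rowK -/(basis_request i).
have sub_betas u : (localized_betas u <= mxcol localized_betas)%MS.
  exact: sub_mxcol.
have side_sub : (side_row i <= mxcol localized_betas)%MS.
  apply: submx_trans (sub_betas (side_owner i)); rewrite -addsmxE.
  exact: submx_trans (fibre_mx_row_sub side_owner side_row i) (addsmxSl _ _).
have block_sub : (block_row i <= mxcol localized_betas)%MS.
  apply: submx_trans (sub_betas (block_owner i)); rewrite -addsmxE.
  exact: submx_trans (fibre_mx_row_sub block_owner block_row i) (addsmxSr _ _).
rewrite -[coded_part _](addrK (side_row i)) -e_vec_split ?basis_request_in //.
by rewrite addmx_sub ?eqmx_opp.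
Qed.

Lemma localized_sol : decentral_sol R B localized_betas.
Proof.
split; first exact: localized_supp.
move=> u a Rua; have req : (u, a) \in requests by rewrite inE Rua.
apply/submxP; rewrite (e_vec_split req) -addsmxE addmx_sub_adds ?submxMl //.
exact: submx_trans (enum_matrix_sub coded_part req) localized_span.
Qed.

End LocalizedSolution.

Theorem theorem4 (n m : nat) (R B : 'M['F_2]_(n, m)) (c d : nat) :
  EIC_problem R B -> is_C R B c -> is_D R B d -> (d <= 2 * c)%N.
Proof.
move=> _ [[beta beta_sol] _] [[hs [betas [betas_sol _]]] d_min].
apply: leq_trans (localized_length R B beta).
exact/d_min/localized_sol/decentral_sol_held/betas_sol.
Qed.
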